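(* Let $S,T\subseteq\mathbb{Z}_{>0}$ be finite with $T\preceq S$, and let $S'\subseteq S$ with $S'\neq S$. Let $a=\min(S\setminus S')$ and $b=\min((T\triangleleft S)\setminus(T\triangleleft S'))$. Then $T\triangleleft(S\setminus\{a\})=(T\triangleleft S)\setminus\{b\}$.
   Context: For a finite set $S\subseteq\mathbb{Z}_{>0}$, $S(i)$ denotes its $i$th smallest element. $T\preceq S$ means $|T|\ge|S|$ and $T(i)<S(i)$ for all $i\in[|S|]$. For finite $S,T$, $T\triangleleft S$ is computed by going through $S$ from largest to smallest; each $s$ picks the largest element of $T$ less than $s$ not yet picked (if one exists); $T\triangleleft S$ is the set of picked elements. *)

From mathcomp Require Import all_boot all_order.
From mathcomp Require Import finmap.
Set Implicit Arguments. Unset Strict Implicit. Unset Printing Implicit Defensive.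
Local Open Scope fset_scope.

(* S(i): the i-th smallest element of S, 0-indexed (i < #|`S|). *)
Definition ith (S : {fset nat}) (i : nat) : nat := nth 0 (sort leq S) i.

Definition precs (T S : {fset nat}) : Prop :=
  #|`S| <= #|`T| /\ forall i, i < #|`S| -> ith T i < ith S i.

Definition pick_step (T : {fset nat}) (P : {fset nat}) (s : nat) : {fset nat} :=
  let C := [fset t in T | (t < s) && (t \notin P)] in
  if C == fset0 then P else (\max_(t <- C) t) |` P.

Definition tri (T S : {fset nat}) : {fset nat} :=
  foldl (pick_step T) fset0 (sort geq S).

From mathcomp Require Import all_boot all_order.
From mathcomp Require Import finmap.

(* Two consecutive picking steps commute, so T ◁ X does not depend on the
   order in which X is processed.  Hence T ◁ (X ∪ {s}) is T ◁ X followed by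
   one step for s, and enlarging X only adds picks.  Processing S in
   increasing order, T ⪯ S guarantees that every element of S picks, so
   T ◁ S = (T ◁ (S∖{a})) ∪ {c}, where c is the largest element of T below a
   that S∖{a} leaves unpicked.  The elements of S∖{a} that are not in S' all
   exceed a > c, so each extra pick they make while growing T ◁ S' to
   T ◁ (S∖{a}) is above the still unpicked c; therefore c = b. *)

Set Implicit Arguments.
Unset Strict Implicit.
Unset Printing Implicit Defensive.

Local Open Scope fset_scope.

Lemma bigmax_mem (r : seq nat) : 0 < size r -> \max_(t <- r) t \in r.
Proof.
elim: r => [|x r IH] // _; rewrite big_cons inE /maxn.
case: ltnP => [lt_x_max|_]; last by rewrite eqxx.
by rewrite IH ?orbT //; case: r {IH} lt_x_max => //; rewrite big_nil.
Qed.

Lemma foldl_rcommute (A R : Type) (f : R -> A -> R) :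
    (forall z x y, f (f z x) y = f (f z y) x) ->
  forall z x s, foldl f (f z x) s = f (foldl f z s) x.
Proof. by move=> fC z x s; elim: s z => //= y s IH z; rewrite fC IH. Qed.

Lemma perm_foldl (A : eqType) (R : Type) (f : R -> A -> R) :
    (forall z x y, f (f z x) y = f (f z y) x) ->
  forall z s1 s2, perm_eq s1 s2 -> foldl f z s1 = foldl f z s2.
Proof.
move=> fC z s1; elim: s1 z => [|x s1 IH] z s2 eq12.
  by move: eq12; rewrite perm_sym => /perm_nilP->.
have x_s2 : x \in s2 by rewrite -(perm_mem eq12) mem_head.
move: eq12; case/splitPr: x_s2 => s2a s2b.
rewrite -[x :: s2b]cat1s perm_sym perm_catCA /= perm_cons perm_sym => /IH eq12 /=.
by rewrite eq12 foldl_rcommute // !foldl_cat /= foldl_rcommute.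
Qed.

Section PickStep.

Variable T : {fset nat}.

Definition pickable (P : {fset nat}) (s t : nat) : bool :=
  [&& t \in T, t < s & t \notin P].

Variant pick_step_spec (P : {fset nat}) (s : nat) : {fset nat} -> Prop :=
  | PickStepNone of (forall t, ~~ pickable P s t) : pick_step_spec P s P
  | PickStepSome c of pickable P s c & (forall t, pickable P s t -> t <= c) :
      pick_step_spec P s (c |` P).

Lemma pick_stepP P s : pick_step_spec P s (pick_step T P s).
Proof.
rewrite /pick_step; set C := [fset t in T | _].
have inC t : (t \in C) = pickable P s t by rewrite !inE.
case: eqP => [C0|/eqP C_neq0].
  by constructor=> t; rewrite -inC C0 inE.
constructor=> [|t]; last by rewrite -inC => tC; exact: leq_bigmax_seq.
by rewrite -inC bigmax_mem // cardfs_gt0.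
Qed.

Lemma pick_step_none P s : (forall t, ~~ pickable P s t) -> pick_step T P s = P.
Proof. by move=> none; case: pick_stepP => // c c_pk _; have := none c; rewrite c_pk. Qed.

Lemma pick_step_max P s c :
  pickable P s c -> (forall t, pickable P s t -> t <= c) -> pick_step T P s = c |` P.
Proof.
move=> c_pk c_max; case: pick_stepP => [none|d d_pk d_max].
  by have := none c; rewrite c_pk.
by rewrite (@anti_leq c d) ?c_max ?d_max.
Qed.

Lemma eq_pick_step P s1 s2 : pickable P s1 =1 pickable P s2 ->
  pick_step T P s1 = pick_step T P s2.
Proof.
move=> eq_pk; rewrite /pick_step.
suff -> : [fset t in T | (t < s1) && (t \notin P)] =
          [fset t in T | (t < s2) && (t \notin P)] by [].
by apply/fsetP=> t; have := eq_pk t; rewrite !inE.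
Qed.

Lemma pickable_fsetU1 x P s t : pickable (x |` P) s t = (t != x) && pickable P s t.
Proof. by rewrite /pickable !inE negb_or; case: (t != x); rewrite ?andbF. Qed.

Lemma pickable_leq P s1 s2 t : s1 <= s2 -> pickable P s1 t -> pickable P s2 t.
Proof. by move=> le_s12 /and3P[tT ts1 tP]; rewrite /pickable tT tP (leq_trans ts1). Qed.

Lemma pick_stepC P s1 s2 :
  pick_step T (pick_step T P s1) s2 = pick_step T (pick_step T P s2) s1.
Proof.
wlog le_s12 : s1 s2 / s1 <= s2.
  by move=> wlog; have [/wlog|/ltnW/wlog] := leqP s1 s2.
(* Let c, d be the picks of s1, s2 from P.  If d < s1 then c = d, and both
   orders pick d first and then face the same candidates; otherwise
   c < s1 <= d, and both orders pick exactly c and d. *)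
case: (pick_stepP P s2) => [none2|d d_pk2 d_max].
  have none1 t : ~~ pickable P s1 t by apply: contra (none2 t); exact: pickable_leq.
  by rewrite !pick_step_none.
case: (pick_stepP P s1) => [none1|c c_pk1 c_max].
  rewrite (pick_step_max d_pk2 d_max) pick_step_none // => t.
  by rewrite pickable_fsetU1 negb_and none1 orbT.
have le_cd : c <= d by apply/d_max/(pickable_leq le_s12).
have [lt_d_s1|le_s1_d] := ltnP d s1.
  have d_pk1 : pickable P s1 d.
    by case/and3P: d_pk2 => dT _ dP; rewrite /pickable dT dP lt_d_s1.
  have {le_cd}<- : c = d by apply/anti_leq; rewrite le_cd c_max.
  apply: eq_pick_step => t; rewrite !pickable_fsetU1; case: (t != c) => //=.
  apply/idP/idP=> [t_pk|]; last exact: pickable_leq.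
  case/and3P: (t_pk) => tT _ tP; rewrite /pickable tT tP andbT.
  exact: leq_ltn_trans (d_max t t_pk) lt_d_s1.
have neq_dc : d != c by rewrite neq_ltn (leq_trans _ le_s1_d) ?orbT //; case/and3P: c_pk1.
have pk_d : pickable (c |` P) s2 d by rewrite pickable_fsetU1 neq_dc.
have pk_c : pickable (d |` P) s1 c by rewrite pickable_fsetU1 eq_sym neq_dc.
have max_d t : pickable (c |` P) s2 t -> t <= d.
  by rewrite pickable_fsetU1 => /andP[_ /d_max].
have max_c t : pickable (d |` P) s1 t -> t <= c.
  by rewrite pickable_fsetU1 => /andP[_ /c_max].
by rewrite (pick_step_max pk_d max_d) (pick_step_max pk_c max_c) fsetUCA.
Qed.

Lemma fsubset_pick_step P s : P `<=` pick_step T P s.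
Proof. by case: pick_stepP => // c *; exact: fsubsetU1. Qed.

Lemma pick_step_sub P s : pick_step T P s `<=` P `|` [fset t in T | t < s].
Proof.
case: pick_stepP => [_|c /and3P[cT cs _] _]; first exact: fsubsetUl.
by apply/fsubsetP=> t; rewrite !inE => /orP[/eqP->|->]; rewrite ?cT ?cs ?orbT.
Qed.

Lemma card_pick_step P s : #|` pick_step T P s| <= #|` P|.+1.
Proof. by case: pick_stepP => // c *; rewrite cardfsU1; case: (c \notin P). Qed.

Lemma fsubset_foldl_pick_step P l : P `<=` foldl (pick_step T) P l.
Proof.
elim: l P => //= s l IH P.
exact: fsubset_trans (fsubset_pick_step P s) (IH _).
Qed.

Lemma card_foldl_pick_step P l : #|` foldl (pick_step T) P l| <= #|` P| + size l.
Proof.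
elim: l P => [|s l IH] P /=; first by rewrite addn0.
by rewrite addnS -addSn (leq_trans (IH _)) // leq_add2r card_pick_step.
Qed.

Lemma foldl_pick_step_sub P l b : all (fun s => s <= b) l ->
  foldl (pick_step T) P l `<=` P `|` [fset t in T | t < b].
Proof.
elim: l P => [|s l IH] P /=; first by move=> _; exact: fsubsetUl.
case/andP=> sb l_le_b; apply: fsubset_trans (IH _ l_le_b) _.
apply/fsubsetP=> t /fsetUP[/(fsubsetP (pick_step_sub P s))|]; rewrite !inE.
  by case/orP=> [->//|/andP[-> ts]]; rewrite (leq_trans ts sb) orbT.
by move->; rewrite orbT.
Qed.

Lemma card_foldl_pick_step_sorted l : sorted ltn l ->
    (forall i, i < size l -> i < #|` [fset t in T | t < nth 0 l i]|) ->
  #|` foldl (pick_step T) fset0 l| = size l.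
Proof.
elim/last_ind: l => [|l s IH]; first by rewrite cardfs0.
rewrite (sorted_pairwise ltn_trans) pairwise_rcons -(sorted_pairwise ltn_trans).
case/andP=> l_lt_s l_sorted enough; rewrite foldl_rcons size_rcons.
set R := foldl _ _ l.
have card_R : #|` R| = size l.
  apply: IH => // i il.
  by have := enough i; rewrite size_rcons nth_rcons il ltnS; apply; exact: ltnW.
have R_sub : R `<=` [fset t in T | t < s].
  rewrite -[X in _ `<=` X]fset0U foldl_pick_step_sub //.
  by apply: sub_all l_lt_s => x; exact: ltnW.
have lt_R : #|` R| < #|` [fset t in T | t < s]|.
  rewrite card_R; have := enough (size l).
  by rewrite size_rcons nth_rcons ltnn eqxx; apply.
case: pick_stepP => [none|c /and3P[_ _ cR] _]; last by rewrite cardfsU1 cR card_R.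
suff /fsubset_leq_card : [fset t in T | t < s] `<=` R by rewrite leqNgt lt_R.
apply/fsubsetP=> t; rewrite inE => /andP[tT ts].
by have := none t; rewrite /pickable tT ts negbK.
Qed.

Lemma foldl_pick_step_gt P l c : c \in T -> c \notin foldl (pick_step T) P l ->
  all (fun s => c < s) l -> {in foldl (pick_step T) P l `\` P, forall t, c < t}.
Proof.
elim: l P => [|s l IH] P cT /=; first by move=> _ _ t; rewrite fsetDv inE.
move=> c_out /andP[cs c_lt] t; rewrite inE => /andP[tP t_in].
have c_pk : pickable P s c.
  rewrite /pickable cT cs; apply: contra c_out; apply: fsubsetP.
  exact: fsubset_trans (fsubset_pick_step P s) (fsubset_foldl_pick_step _ l).
case: (boolP (t \in pick_step T P s)) => t_step.
  move: c_out t_step; case: pick_stepP => [none|d _ d_max].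
    by have := none c; rewrite c_pk.
  move=> c_out /fset1UP[->|tP']; last by rewrite tP' in tP.
  rewrite ltn_neqAle d_max // andbT; apply: contraNneq c_out => ->.
  exact: fsubsetP (fsubset_foldl_pick_step _ l) d (fset1U1 d P).
by apply: (IH _ cT c_out c_lt); rewrite inE t_step.
Qed.

End PickStep.

Lemma tri_perm (T X : {fset nat}) (l : seq nat) :
  perm_eq l X -> tri T X = foldl (pick_step T) fset0 l.
Proof.
by move=> eq_lX; apply: perm_foldl (pick_stepC T) _ _ _ _; rewrite perm_sort perm_sym.
Qed.

Lemma triE (T X : {fset nat}) : tri T X = foldl (pick_step T) fset0 X.
Proof. exact: tri_perm. Qed.

Lemma tri_fsetU1 (T X : {fset nat}) s :
  s \notin X -> tri T (s |` X) = pick_step T (tri T X) s.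
Proof.
move=> sX; have eq_sX : perm_eq (rcons X s) (s |` X).
  by apply: uniq_perm => [||x]; rewrite ?rcons_uniq ?sX ?fset_uniq ?mem_rcons ?inE.
by rewrite (tri_perm T eq_sX) foldl_rcons -triE.
Qed.

Lemma tri_fsetD (T X Y : {fset nat}) :
  X `<=` Y -> tri T Y = foldl (pick_step T) (tri T X) (Y `\` X).
Proof.
move=> XY; have eq_XY : perm_eq (X ++ Y `\` X) Y.
  apply: uniq_perm => [||x]; rewrite ?cat_uniq ?fset_uniq ?andbT //.
    by apply/hasPn=> x; rewrite inE => /andP[].
  rewrite mem_cat inE.
  by case: (boolP (x \in X)) => //= xX; rewrite (fsubsetP XY x xX).
by rewrite (tri_perm T eq_XY) foldl_cat -triE.
Qed.

Lemma fsubset_tri (T X Y : {fset nat}) : X `<=` Y -> tri T X `<=` tri T Y.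
Proof. by move=> XY; rewrite (tri_fsetD T XY) fsubset_foldl_pick_step. Qed.

Lemma card_tri_leq (T X : {fset nat}) : #|` tri T X| <= #|` X|.
Proof.
rewrite triE.
by have := card_foldl_pick_step T fset0 X; rewrite cardfs0.
Qed.

Lemma precs_card_lt (T S : {fset nat}) i : precs T S -> i < #|` S| ->
  i < #|` [fset t in T | t < ith S i]|.
Proof.
move=> [le_ST lt_ith] iS; set lT := sort leq T.
have iT : i < size lT by rewrite size_sort (leq_trans iS le_ST).
have lT_uniq : uniq lT by rewrite sort_uniq fset_uniq.
rewrite -(size_iota 0 i.+1) -(size_map (nth 0 lT)).
apply: uniq_leq_size.
  rewrite map_inj_in_uniq ?iota_uniq // => j k; rewrite !mem_iota !add0n !ltnS.
  move=> /= ji ki /eqP; rewrite nth_uniq ?(leq_ltn_trans ji) ?(leq_ltn_trans ki) //.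
  by move/eqP.
move=> x /mapP[j]; rewrite mem_iota add0n ltnS /= => ji ->.
have jT : j < size lT := leq_ltn_trans ji iT.
have := mem_nth 0 jT; rewrite mem_sort => nthT.
rewrite inE; apply/andP; split; first exact: nthT.
apply: leq_ltn_trans (lt_ith i iS).
exact: (sorted_leq_nth leq_trans leqnn 0 (sort_sorted leq_total T)).
Qed.

Lemma card_tri_precs (T S : {fset nat}) : precs T S -> #|` tri T S| = #|` S|.
Proof.
move=> TS; rewrite (@tri_perm _ _ (sort leq S)) ?perm_sort //.
rewrite card_foldl_pick_step_sorted ?size_sort //.
  by rewrite ltn_sorted_uniq_leq sort_uniq fset_uniq sort_sorted //; exact: leq_total.
by move=> i; exact: precs_card_lt.
Qed.

Lemma tri_precs_fsetD1 (T S : {fset nat}) a : precs T S -> a \in S ->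
  exists2 c, pickable T (tri T (S `\ a)) a c & tri T S = c |` tri T (S `\ a).
Proof.
move=> TS aS; have triS : tri T S = pick_step T (tri T (S `\ a)) a.
  by rewrite -tri_fsetU1 ?fsetD11 // fsetD1K.
have := card_tri_precs TS; rewrite triS (cardfsD1 a S) aS.
case: pick_stepP => [_ card_eq|c c_pk _ _]; last by exists c.
by have := card_tri_leq T (S `\ a); rewrite card_eq add1n ltnn.
Qed.

Theorem lemma4p15 (S T S' : {fset nat}) (a b : nat) :
  (forall x, x \in S -> 0 < x) ->
  (forall x, x \in T -> 0 < x) ->
  precs T S ->
  S' `<=` S -> S' != S ->
  a \in S `\` S' -> (forall x, x \in S `\` S' -> a <= x) ->
  b \in tri T S `\` tri T S' -> (forall x, x \in tri T S `\` tri T S' -> b <= x) ->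
  tri T (S `\ a) = tri T S `\ b.
Proof.
move=> _ _ TS S'S _ /fsetDP[aS aS'] a_min bD b_min; set A := S `\ a.
have S'A : S' `<=` A.
  apply/fsubsetP=> x xS'; rewrite !inE (fsubsetP S'S x xS') andbT.
  by apply: contraNneq aS' => <-.
have [c /and3P[cT ca c_notA] triSc] := tri_precs_fsetD1 TS aS.
have c_gt : {in tri T A `\` tri T S', forall t, c < t}.
  move: c_notA; rewrite (tri_fsetD T S'A) => c_notA.
  apply: foldl_pick_step_gt => //; apply/allP=> s; rewrite !inE => /and3P[sS' _ sS].
  by apply: leq_trans ca (a_min s _); rewrite inE sS' sS.
have c_notS' : c \notin tri T S' := contra (fsubsetP (fsubset_tri T S'A) c) c_notA.
have -> : b = c.
  apply/anti_leq; rewrite b_min /=; last by rewrite triSc !inE eqxx c_notS'.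
  move: bD; rewrite triSc !inE => /andP[bS' /orP[/eqP->|bA]]; first exact: leqnn.
  by apply/ltnW/c_gt; rewrite inE bS' bA.
by rewrite triSc fsetU1K.
Qed.
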